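(* For every graph $G$ with at least one edge, $wr(G)\le sr(G)\le \lceil (\Delta(G)+1)/2\rceil$, where $\Delta(G)$ is the maximum degree of $G$.
   Context: All graphs are finite, simple and undirected. For a set $E'$ of edges of a graph, the subgraph induced by $E'$ is the graph whose edge set is $E'$ and whose vertex set is the set of endpoints of edges in $E'$. A graph is weakly semiregular if there are two numbers $a,b$ (not necessarily distinct) such that the degree of every vertex is $a$ or $b$; $wr(G)$ is the minimum number of subsets into which $E(G)$ can be partitioned so that the subgraph induced by each subset is weakly semiregular. A graph is semiregular if there is an integer $d$ such that every vertex has degree $d$ or $d+1$; $sr(G)$ is the minimum number of subsets into which $E(G)$ can be partitioned so that the subgraph induced by each subset is semiregular. *)

(* A finite simple undirected graph is a symmetric,
   irreflexive relation g : rel T on a finite vertex type T. *)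
From mathcomp Require Import all_boot.
Set Implicit Arguments. Unset Strict Implicit. Unset Printing Implicit Defensive.

Section Graph.
Variables (T : finType) (g : rel T).

Definition deg (v : T) : nat := #|[set w | g v w]|.

Definition maxdeg : nat := \max_(v : T) deg v.

Definition edges : {set {set T}} :=
  [set A : {set T} | [exists x, exists y, g x y && (A == [set x; y])]].

(* A partition of E(G) into k (possibly empty) classes, given by a colouring
   c of edges with colours in 'I_k; class i is [set A in edges | c A == i]. *)
Definition cdeg k (c : {ffun {set T} -> 'I_k}) (i : 'I_k) (v : T) : nat :=
  #|[set A in edges | (c A == i) && (v \in A)]|.

(* The vertices of the induced subgraph are those with cdeg > 0.
   Weakly semiregular: all its degrees lie in {a, b}.  (All degrees are
   <= #|T|, so quantifying over 'I_#|T|.+1 loses nothing.) *)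
Definition class_wsr k (c : {ffun {set T} -> 'I_k}) (i : 'I_k) : bool :=
  [exists a : 'I_#|T|.+1, exists b : 'I_#|T|.+1,
     [forall v, (0 < cdeg c i v) ==>
                ((cdeg c i v == a) || (cdeg c i v == b))]].

Definition class_sr k (c : {ffun {set T} -> 'I_k}) (i : 'I_k) : bool :=
  [exists d : 'I_#|T|.+1,
     [forall v, (0 < cdeg c i v) ==>
                ((cdeg c i v == d) || (cdeg c i v == d.+1))]].

Definition wr_part (k : nat) : bool :=
  [exists c : {ffun {set T} -> 'I_k}, [forall i, class_wsr c i]].

Definition sr_part (k : nat) : bool :=
  [exists c : {ffun {set T} -> 'I_k}, [forall i, class_sr c i]].

(* least k admitting such a partition; k = #|edges| always works
   (one edge per class), so searching in 0..#|edges| finds the minimum. *)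
Definition wr : nat := find wr_part (iota 0 #|edges|.+1).
Definition sr : nat := find sr_part (iota 0 #|edges|.+1).

End Graph.

(* Give every edge an orientation and a colour from 'I_k so that each vertex
   has at most one outgoing and at most one incoming arc of every colour (a
   proper edge colouring of the bipartite double cover).  Every colour class
   then has maximum degree at most 2, so with its isolated vertices discarded
   it is semiregular with d = 1.  Such colourings exist when Delta <= 2k and
   are built edge by edge, since a vertex of degree < 2k has a free outgoing
   or a free incoming colour.  If u has a free outgoing colour a and v a free
   incoming colour b, swapping a and b along the alternating a/b-trail ending
   at v frees a at v without touching u, and u -> v gets colour a.  If both u
   and v have free incoming colours, reversing the directed path of such a
   colour c starting at u frees c on the outgoing side of u and reduces to the
   first case; the remaining cases follow by exchanging u and v or reversing
   all arcs.  Take k = (Delta + 2) / 2; semiregular graphs are weakly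
   semiregular, which gives wr <= sr. *)

From mathcomp Require Import all_boot zify perm.
Set Implicit Arguments. Unset Strict Implicit. Unset Printing Implicit Defensive.

Section PartialSuccessor.
Variables (U : finType) (e : rel U).
Hypothesis e_fun : forall x y z, e x y -> e x z -> y = z.

Definition psucc x := odflt x [pick y | e x y].

Lemma psuccE x y : e x y -> psucc x = y.
Proof.
by move=> exy; rewrite /psucc; case: pickP => [z /(e_fun exy) ->|/(_ y)]; rewrite ?exy.
Qed.

Lemma psucc_sink x : (forall y, ~~ e x y) -> psucc x = x.
Proof. by move=> sink; rewrite /psucc; case: pickP => // y; rewrite (negbTE (sink y)). Qed.

Variable t : U.

Lemma reach_arc x y : e x y -> x != t -> fconnect psucc x t = fconnect psucc y t.
Proof. by move=> exy xt; rewrite fconnect_eqVf (negbTE xt) (psuccE exy). Qed.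

Lemma reach_sink x : (forall y, ~~ e x y) -> fconnect psucc x t -> x = t.
Proof. by move=> /psucc_sink fx /iter_findex <-; rewrite iter_fix. Qed.

End PartialSuccessor.

Section SubgraphDegree.
Variables (T : finType) (h' h : rel T).
Hypothesis h'h : subrel h' h.

Lemma deg_subrel x : deg h' x <= deg h x.
Proof. by apply/subset_leq_card/subsetP => y; rewrite !inE => /h'h. Qed.

Lemma deg_subrel_lt x y : h x y -> ~~ h' x y -> deg h' x < deg h x.
Proof.
move=> hxy nxy; apply/proper_card/properP; split.
  by apply/subsetP => z; rewrite !inE => /h'h.
by exists y; rewrite !inE.
Qed.

End SubgraphDegree.

Section Dicolouring.
Variables (T : finType) (k : nat).
Implicit Types (h : rel T) (col : T -> T -> option 'I_k).

Definition outs col x d := [set y | col x y == Some d].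
Definition ins col x d := [set y | col y x == Some d].

(* [col x y = Some d] orients the edge xy from x to y and gives it colour d. *)
Record dicolouring h col : Prop := Dicolouring {
  dicol_edge : forall x y, col x y != None -> h x y;
  dicol_asym : forall x y, col x y != None -> col y x = None;
  dicol_cover : forall x y, h x y -> (col x y != None) || (col y x != None);
  dicol_outs : forall x d, #|outs col x d| <= 1;
  dicol_ins : forall x d, #|ins col x d| <= 1 }.

Lemma dicol_out_uniq h col x y z d : dicolouring h col ->
  col x y = Some d -> col x z = Some d -> y = z.
Proof.
move=> Hc exy exz; apply: (card_le1_eqP (dicol_outs Hc x d)); by rewrite inE ?exy ?exz.
Qed.

Lemma dicol_in_uniq h col x y z d : dicolouring h col ->
  col y x = Some d -> col z x = Some d -> y = z.
Proof.
move=> Hc eyx ezx; apply: (card_le1_eqP (dicol_ins Hc x d)); by rewrite inE ?eyx ?ezx.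
Qed.

Lemma dicolouring_transpose h col : symmetric h ->
  dicolouring h col -> dicolouring h (fun x y => col y x).
Proof.
move=> hsym [Hedge Hasym Hcover Houts Hins]; split=> //.
- by move=> x y /Hedge; rewrite hsym.
- by move=> x y /Hasym.
- by move=> x y /Hcover; rewrite orbC.
Qed.

Lemma dicol_saturated_deg h col x : symmetric h -> dicolouring h col ->
  (forall d, outs col x d != set0) -> (forall d, ins col x d != set0) ->
  2 * k <= deg h x.
Proof.
move=> hsym Hc full_out full_in.
pose phi (p : 'I_k * bool) :=
  odflt x [pick y in if p.2 then outs col x p.1 else ins col x p.1].
have phiP p : phi p \in if p.2 then outs col x p.1 else ins col x p.1.
  have : (if p.2 then outs col x p.1 else ins col x p.1) != set0 by case: ifP.
  by case/set0Pn=> y yp; rewrite /phi; case: pickP => // /(_ y); rewrite yp.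
have phi_inj : injective phi.
  move=> [d b] [d' b'] e; move: (phiP (d, b)) (phiP (d', b')).
  rewrite -e {e} /=; move: (phi (d, b)) => y.
  case: b; case: b'; rewrite !inE => /eqP e1 /eqP e2.
  - by move: e2; rewrite e1 => -[->].
  - by have := dicol_asym Hc (x := x) (y := y); rewrite e1 e2 => /(_ isT).
  - by have := dicol_asym Hc (x := y) (y := x); rewrite e1 e2 => /(_ isT).
  - by move: e2; rewrite e1 => -[->].
have := card_imset [set: 'I_k * bool] phi_inj.
rewrite cardsT card_prod card_ord card_bool mulnC => <-.
apply/subset_leq_card/subsetP => _ /imsetP[p _ ->]; rewrite inE.
move: (phiP p); case: p.2; rewrite inE => /eqP e.
  by apply: (dicol_edge Hc); rewrite e.
by rewrite hsym; apply: (dicol_edge Hc); rewrite e.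
Qed.

Lemma dicol_free_port h col x : symmetric h -> dicolouring h col ->
  deg h x < 2 * k ->
  (exists d, outs col x d = set0) \/ (exists d, ins col x d = set0).
Proof.
move=> hsym Hc small.
case: (pickP (fun d => outs col x d == set0)) => [d /eqP|full_out].
  by left; exists d.
case: (pickP (fun d => ins col x d == set0)) => [d /eqP|full_in].
  by right; exists d.
by move: small; rewrite ltnNge (dicol_saturated_deg hsym Hc) // => d;
  rewrite ?full_out ?full_in.
Qed.

Lemma dicol_nil h : (forall x y, ~~ h x y) -> dicolouring h (fun _ _ => None).
Proof.
move=> no_edge; split=> //.
- by move=> x y; rewrite (negbTE (no_edge x y)).
- by move=> x d; rewrite eq_card0 // => y; rewrite !inE.
- by move=> x d; rewrite eq_card0 // => y; rewrite !inE.
Qed.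

Section Reversal.
Variables (h : rel T) (col : T -> T -> option 'I_k) (u : T) (c : 'I_k).
Hypotheses (hsym : symmetric h) (Hc : dicolouring h col) (u_src : ins col u c = set0).

Definition back_arc x y := col y x == Some c.

Lemma back_arc_fun x y z : back_arc x y -> back_arc x z -> y = z.
Proof. by move=> /eqP eyx /eqP ezx; apply: (dicol_in_uniq Hc eyx ezx). Qed.

(* Walking c-arcs backwards from x reaches u exactly when x lies on the
   c-coloured directed path that starts at u. *)
Definition src_path := [set x | fconnect (psucc back_arc) x u].

Lemma src_path_arc x y : col x y = Some c -> (x \in src_path) = (y \in src_path).
Proof.
move=> exy; rewrite !inE; symmetry; apply: (reach_arc back_arc_fun).
  by rewrite /back_arc exy.
apply/eqP => yu; have : x \in ins col u c by rewrite inE -yu exy.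
by rewrite u_src inE.
Qed.

Definition rev_col a b :=
  if (b \in src_path) && (col b a == Some c) then Some c
  else if (a \in src_path) && (col a b == Some c) then None else col a b.

Lemma outs_rev_col z d : outs rev_col z d =
  if (d == c) && (z \in src_path) then ins col z c else outs col z d.
Proof.
have Hanti := dicol_asym Hc; apply/setP => y.
case: (boolP ((d == c) && (z \in src_path))) => [/andP[/eqP-> zP]|C];
  rewrite !inE /rev_col.
  case: ifP => [/andP[yP /eqP e]|A]; first by rewrite e eqxx.
  case: ifP => [/andP[_ /eqP e]|B]; first by rewrite Hanti ?e.
  rewrite zP /= in B; rewrite B; apply/esym/eqP => e.
  by move: A; rewrite (src_path_arc e) zP e eqxx.
case: ifP => [/andP[yP /eqP e]|A].
  have zP : z \in src_path by rewrite -(src_path_arc e).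
  by rewrite Hanti ?e //; apply/eqP => -[dc]; rewrite dc eqxx zP in C.
case: ifP => [/andP[zP /eqP e]|B] //.
by rewrite e; apply/esym/eqP => -[dc]; rewrite dc eqxx zP in C.
Qed.

Lemma ins_rev_col z d : ins rev_col z d =
  if (d == c) && (z \in src_path) then outs col z c else ins col z d.
Proof.
have Hanti := dicol_asym Hc; apply/setP => y.
case: (boolP ((d == c) && (z \in src_path))) => [/andP[/eqP-> zP]|C];
  rewrite !inE /rev_col.
  case: ifP => [/andP[_ /eqP e]|A]; first by rewrite e eqxx.
  case: ifP => [/andP[yP /eqP e]|B]; first by rewrite Hanti ?e.
  rewrite zP /= in A; rewrite A; apply/eqP => e.
  by move: B; rewrite (src_path_arc e) zP e eqxx.
case: ifP => [/andP[zP /eqP e]|A].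
  by rewrite Hanti ?e //; apply/eqP => -[dc]; rewrite dc eqxx zP in C.
case: ifP => [/andP[yP /eqP e]|B] //.
have zP : z \in src_path by rewrite -(src_path_arc e).
by rewrite e; apply/esym/eqP => -[dc]; rewrite dc eqxx zP in C.
Qed.

Lemma rev_col_dicol : dicolouring h rev_col.
Proof.
have [Hedge Hasym Hcover Houts Hins] := Hc; split.
- move=> x y; rewrite /rev_col; case: ifP => [/andP[_ /eqP e] _|_].
    by rewrite hsym; apply: Hedge; rewrite e.
  by case: ifP => // _ /Hedge.
- move=> x y; rewrite {1}/rev_col; case: ifP => [/andP[yP /eqP e] _|A].
    by rewrite /rev_col (Hasym y x) ?e //= andbF yP eqxx.
  by case: ifP => // B /Hasym nn; rewrite /rev_col B A.
- have cover x y : col x y != None -> (rev_col x y != None) || (rev_col y x != None).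
    move=> nn; rewrite {1}/rev_col; case: ifP => // _.
    case: ifP => [/andP[xP /eqP e]|_]; last by rewrite nn.
    by rewrite /= /rev_col xP e eqxx.
  by move=> x y /Hcover /orP[/cover //|/cover]; rewrite orbC.
- by move=> x d; rewrite outs_rev_col; case: ifP.
- by move=> x d; rewrite ins_rev_col; case: ifP.
Qed.

Lemma outs_rev_col_u : outs rev_col u c = set0.
Proof. by rewrite outs_rev_col eqxx inE connect0. Qed.

Lemma ins_rev_col_free w d : w != u -> ins col w d = set0 -> ins rev_col w d = set0.
Proof.
move=> wu w_free; rewrite ins_rev_col; case: ifP => // /andP[/eqP dc].
have w_sink y : ~~ back_arc w y.
  apply/negP => e; have : y \in ins col w d by rewrite inE dc.
  by rewrite w_free inE.
by rewrite inE => /(reach_sink w_sink) wu'; rewrite wu' eqxx in wu.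
Qed.

End Reversal.

Section KempeSwap.
Variables (h : rel T) (col : T -> T -> option 'I_k) (u v : T) (a b : 'I_k).
Hypotheses (Hc : dicolouring h col) (u_free : outs col u a = set0)
  (v_free : ins col v b = set0).

(* [(x, true)] and [(x, false)] are the out- and in-side of x: a-arcs lead
   from out-sides to in-sides, b-arcs back. *)
Definition kempe_arc (p q : T * bool) :=
  match p, q with
  | (x, true), (y, false) => col x y == Some a
  | (y, false), (x, true) => col x y == Some b
  | _, _ => false
  end.

Lemma kempe_arc_fun p q r : kempe_arc p q -> kempe_arc p r -> q = r.
Proof.
case: p q r => x [] [y []] [z []] //= /eqP e1 /eqP e2.
  by rewrite (dicol_out_uniq Hc e1 e2).
by rewrite (dicol_in_uniq Hc e1 e2).
Qed.

(* The in-side of v is a dead end (v_free), so the nodes whose walk ends there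
   form the a/b-alternating trail ending at v; the out-side of u, another dead
   end (u_free), is not on it. *)
Definition kempe_chain := [set p | fconnect (psucc kempe_arc) p (v, false)].

Lemma kempe_chain_arc x y : (col x y == Some a) || (col x y == Some b) ->
  ((x, true) \in kempe_chain) = ((y, false) \in kempe_chain).
Proof.
rewrite !inE => /orP[exy|exy].
  by apply: (reach_arc kempe_arc_fun); rewrite /= ?exy ?xpair_eqE ?andbF.
symmetry; apply: (reach_arc kempe_arc_fun) => //.
apply/eqP => -[yv]; have : x \in ins col v b by rewrite inE -yv.
by rewrite v_free inE.
Qed.

Definition kempe_col x y :=
  if (x, true) \in kempe_chain then omap (tperm a b) (col x y) else col x y.

Lemma omap_tperm (o : option 'I_k) d :
  (omap (tperm a b) o == Some d) = (o == Some (tperm a b d)).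
Proof. by case: o => [e|] //=; rewrite !(inj_eq Some_inj) (canF_eq (tpermK a b)). Qed.

Lemma tperm_off (o : option 'I_k) d : ~~ ((o == Some a) || (o == Some b)) ->
  (o == Some (tperm a b d)) = (o == Some d).
Proof.
case: o => [e|] //=; rewrite !(inj_eq Some_inj) negb_or => /andP[ea eb].
by rewrite eq_sym (canF_eq (tpermK a b)) tpermD 1?eq_sym.
Qed.

Lemma outs_kempe_col z d : outs kempe_col z d =
  if (z, true) \in kempe_chain then outs col z (tperm a b d) else outs col z d.
Proof.
apply/setP => y; rewrite [in LHS]inE /kempe_col.
by case: ((z, true) \in kempe_chain); rewrite inE ?omap_tperm.
Qed.

Lemma ins_kempe_col z d : ins kempe_col z d =
  if (z, false) \in kempe_chain then ins col z (tperm a b d) else ins col z d.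
Proof.
apply/setP => y; rewrite [in LHS]inE /kempe_col.
case: (boolP ((col y z == Some a) || (col y z == Some b))) => [ab|not_ab].
  by rewrite (kempe_chain_arc ab); case: ((z, false) \in kempe_chain);
    rewrite !inE ?omap_tperm.
by case: ((y, true) \in kempe_chain); case: ((z, false) \in kempe_chain);
  rewrite !inE ?omap_tperm ?tperm_off.
Qed.

Lemma kempe_col_none x y : (kempe_col x y != None) = (col x y != None).
Proof. by rewrite /kempe_col; case: ifP => //; case: (col x y). Qed.

Lemma kempe_col_dicol : dicolouring h kempe_col.
Proof.
have [Hedge Hasym Hcover Houts Hins] := Hc; split.
- by move=> x y; rewrite kempe_col_none => /Hedge.
- by move=> x y; rewrite kempe_col_none => /Hasym e; rewrite /kempe_col e; case: ifP.
- by move=> x y /Hcover; rewrite !kempe_col_none.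
- by move=> x d; rewrite outs_kempe_col; case: ifP.
- by move=> x d; rewrite ins_kempe_col; case: ifP.
Qed.

Lemma outs_kempe_col_u : outs kempe_col u a = set0.
Proof.
rewrite outs_kempe_col; case: ifP => // /[!inE] chain_u.
have u_sink q : ~~ kempe_arc (u, true) q.
  case: q => y [] //=; apply/negP => e; have : y \in outs col u a by rewrite inE.
  by rewrite u_free inE.
by move/(reach_sink u_sink): chain_u.
Qed.

Lemma ins_kempe_col_v : ins kempe_col v a = set0.
Proof. by rewrite ins_kempe_col inE connect0 tpermL. Qed.

End KempeSwap.

Section AddEdge.
Variables (h' h : rel T) (u v : T).
Hypotheses (h'sym : symmetric h') (uv : u != v) (nuv : ~~ h' u v)
  (hE : forall x y, h x y = h' x y || (x == u) && (y == v) || (x == v) && (y == u)).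

Definition add_arc col a x y := if (x == u) && (y == v) then Some a else col x y.

Lemma outs_add_arc col a x d : outs col u a = set0 ->
  outs (add_arc col a) x d \subset if (x == u) && (d == a) then [set v] else outs col x d.
Proof.
move=> u_free; apply/subsetP => y; rewrite !inE /add_arc.
case: ifP => [/andP[/eqP-> /eqP->] /eqP[<-]|_ e]; first by rewrite !eqxx inE.
case: ifP => [/andP[/eqP xu /eqP da]|_]; last by rewrite inE.
have : y \in outs col u a by rewrite inE -xu -da.
by rewrite u_free in_set0.
Qed.

Lemma ins_add_arc col a x d : ins col v a = set0 ->
  ins (add_arc col a) x d \subset if (x == v) && (d == a) then [set u] else ins col x d.
Proof.
move=> v_free; apply/subsetP => y; rewrite !inE /add_arc.
case: ifP => [/andP[/eqP-> /eqP->] /eqP[<-]|_ e]; first by rewrite !eqxx inE.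
case: ifP => [/andP[/eqP xv /eqP da]|_]; last by rewrite inE.
have : y \in ins col v a by rewrite inE -xv -da.
by rewrite v_free in_set0.
Qed.

Lemma add_arc_dicol col a : dicolouring h' col ->
  outs col u a = set0 -> ins col v a = set0 -> dicolouring h (add_arc col a).
Proof.
move=> [Hedge Hasym Hcover Houts Hins] u_free v_free.
have nvu : ~~ h' v u by rewrite h'sym.
have add_none x y : col x y != None -> add_arc col a x y != None.
  by rewrite /add_arc; case: ifP.
split.
- move=> x y; rewrite /add_arc hE.
  by case: ifP => [/andP[/eqP-> /eqP->] _|_ /Hedge ->]; rewrite ?eqxx ?orbT.
- move=> x y; rewrite /add_arc; case: ifP => [/andP[/eqP-> /eqP->] _|_ nn].
    rewrite eq_sym (negbTE uv) /=.
    by apply/eqP; apply: contraNT nvu => /Hedge.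
  case: ifP => [/andP[/eqP yu /eqP xv]|_]; last exact: Hasym.
  by move: nuv; rewrite -xv -yu h'sym (Hedge _ _ nn).
- move=> x y; rewrite hE => /orP[/orP[/Hcover /orP[/add_none->//|/add_none->]|]|];
    rewrite ?orbT // => /andP[/eqP-> /eqP->]; by rewrite /add_arc !eqxx ?orbT.
- move=> x d; apply: leq_trans (subset_leq_card (outs_add_arc x d u_free)) _.
  by case: ifP; rewrite ?cards1.
- move=> x d; apply: leq_trans (subset_leq_card (ins_add_arc x d v_free)) _.
  by case: ifP; rewrite ?cards1.
Qed.

Lemma dicol_extend_free col a b : dicolouring h' col ->
  outs col u a = set0 -> ins col v b = set0 -> exists col', dicolouring h col'.
Proof.
move=> Hc u_free v_free; exists (add_arc (kempe_col col v a b) a).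
apply: add_arc_dicol; [exact: kempe_col_dicol|exact: outs_kempe_col_u|].
exact: ins_kempe_col_v Hc v_free.
Qed.

Lemma dicol_extend_in col c b : dicolouring h' col ->
  ins col u c = set0 -> ins col v b = set0 -> exists col', dicolouring h col'.
Proof.
move=> Hc u_src v_free; apply: (@dicol_extend_free (rev_col col u c) c b).
- exact: rev_col_dicol h'sym Hc u_src.
- exact: outs_rev_col_u Hc u_src.
- by apply: (ins_rev_col_free Hc u_src); rewrite // eq_sym.
Qed.

End AddEdge.

Lemma dicol_extend h' h u v col : symmetric h' -> u != v -> ~~ h' u v ->
  (forall x y, h x y = h' x y || (x == u) && (y == v) || (x == v) && (y == u)) ->
  deg h' u < 2 * k -> deg h' v < 2 * k ->
  dicolouring h' col -> exists col', dicolouring h col'.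
Proof.
move=> h'sym uv nuv hE du dv Hc.
have vu : v != u by rewrite eq_sym.
have nvu : ~~ h' v u by rewrite h'sym.
have hE' x y : h x y = h' x y || (x == v) && (y == u) || (x == u) && (y == v).
  by rewrite hE orbAC.
have [[a ua]|[c uc]] := dicol_free_port h'sym Hc du;
  have [[b vb]|[d vd]] := dicol_free_port h'sym Hc dv.
- exact: (dicol_extend_in h'sym uv nuv hE (dicolouring_transpose h'sym Hc) ua vb).
- exact: (dicol_extend_free h'sym uv nuv hE Hc ua vd).
- exact: (dicol_extend_free h'sym vu nvu hE' Hc vb uc).
- exact: (dicol_extend_in h'sym uv nuv hE Hc uc vd).
Qed.

Lemma dicol_exists h : symmetric h -> irreflexive h ->
  (forall x, deg h x <= 2 * k) -> exists col, dicolouring h col.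
Proof.
have [n] := ubnP #|[set p : T * T | h p.1 p.2]|; elim: n h => // n IH h.
rewrite ltnS => size_h hsym hirr hdeg.
case: (pickP [pred p : T * T | h p.1 p.2]) => [[u v] /= huv|no_arc]; last first.
  by exists (fun _ _ => None); apply: dicol_nil => x y; move: (no_arc (x, y)) => /= ->.
pose is_uv x y := (x == u) && (y == v) || (x == v) && (y == u).
pose h' x y := h x y && ~~ is_uv x y.
have h'h : subrel h' h by move=> x y /andP[].
have h'sym : symmetric h'.
  by move=> x y; rewrite /h' /is_uv hsym orbC (andbC (y == u)) (andbC (y == v)).
have uv : u != v by apply: contraTneq huv => ->; rewrite hirr.
have nuv : ~~ h' u v by rewrite /h' /is_uv !eqxx andbF.
have nvu : ~~ h' v u by rewrite h'sym.
have hE x y : h x y = h' x y || (x == u) && (y == v) || (x == v) && (y == u).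
  rewrite /h' -orbA -/(is_uv x y); case: (boolP (is_uv x y)) => [|_]; last first.
    by rewrite andbT orbF.
  by rewrite andbF /= => /orP[] /andP[/eqP-> /eqP->]; rewrite // hsym.
have [col Hc] : exists col, dicolouring h' col.
  apply: IH => //.
  - apply: leq_trans size_h; apply/proper_card/properP; split.
      by apply/subsetP => p; rewrite !inE => /h'h.
    by exists (u, v); rewrite !inE.
  - by move=> x; rewrite /h' hirr.
  - by move=> x; apply: leq_trans (deg_subrel h'h x) (hdeg x).
apply: (dicol_extend h'sym uv nuv hE _ _ Hc).
  exact: leq_trans (deg_subrel_lt h'h huv nuv) (hdeg u).
by apply: leq_trans (deg_subrel_lt h'h _ nvu) (hdeg v); rewrite hsym.
Qed.

End Dicolouring.

Section EdgeClasses.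
Variables (T : finType) (g : rel T).
Hypothesis gsym : symmetric g.

Lemma set2_eq (a b c d : T) :
  [set a; b] = [set c; d] -> (a = c /\ b = d) \/ (a = d /\ b = c).
Proof.
move=> e; have /set2P[] : a \in [set c; d] by rewrite -e set21.
all: have /set2P[] : b \in [set c; d] by rewrite -e set22.
all: have /set2P[] : d \in [set a; b] by rewrite e set22.
all: have /set2P[] : c \in [set a; b] by rewrite e set21.
all: move=> c_ d_ b_ a_; subst; by [left | right].
Qed.

Lemma edges_set2 A v : A \in edges g -> v \in A -> exists2 w, g v w & A = [set v; w].
Proof.
rewrite inE => /existsP[x /existsP[y /andP[gxy /eqP ->]]].
rewrite !inE => /orP[/eqP->|/eqP->]; first by exists y.
by exists x; [rewrite gsym | rewrite setUC].
Qed.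

Lemma card_edges_at (P : pred {set T}) v :
  #|[set A in edges g | P A && (v \in A)]| <= #|[set w | g v w && P [set v; w]]|.
Proof.
apply: leq_trans (leq_imset_card (fun w => [set v; w]) _).
apply/subset_leq_card/subsetP => A; rewrite inE => /andP[Ae /andP[PA vA]].
have [w gvw AE] := edges_set2 Ae vA; apply/imsetP; exists w => //.
by rewrite inE gvw -AE.
Qed.

Lemma maxdeg_le_card_edges : irreflexive g -> maxdeg g <= #|edges g|.
Proof.
move=> girr; apply/bigmax_leqP => v _.
rewrite /deg -(card_in_imset (f := fun w => [set v; w])); last first.
  move=> w w'; rewrite !inE => gvw _ /set2_eq[[_ //]|[_ wv]].
  by move: gvw; rewrite wv girr.
apply/subset_leq_card/subsetP => A /imsetP[w]; rewrite inE => gvw ->.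
by rewrite inE; apply/existsP; exists v; apply/existsP; exists w; rewrite gvw eqxx.
Qed.

Lemma cdeg_le_card k (c : {ffun {set T} -> 'I_k}) i v : cdeg g c i v <= #|T|.
Proof. exact: leq_trans (card_edges_at _ _) (max_card _). Qed.

Lemma sr_part_wr_part k : sr_part g k -> wr_part g k.
Proof.
case/existsP => c /forallP c_sr; apply/existsP; exists c; apply/forallP => i.
case/existsP: (c_sr i) => d /forallP d_ok; apply/existsP; exists d.
apply/existsP; exists (inord d.+1); apply/forallP => v; apply/implyP => pos.
case/orP: (implyP (d_ok v) pos) => [->//|/eqP cd].
by rewrite cd inordK ?eqxx ?orbT // ltnS -cd cdeg_le_card.
Qed.

Definition edge_col k (col : T -> T -> option 'I_k) (A : {set T}) :=
  if [pick p : T * T | (A == [set p.1; p.2]) && (col p.1 p.2 != None)] is Some p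
  then col p.1 p.2 else None.

Lemma edge_colP k (col : T -> T -> option 'I_k) v w d :
  edge_col col [set v; w] = Some d -> (w \in outs col v d) || (w \in ins col v d).
Proof.
rewrite /edge_col; case: pickP => // -[x y] /andP[/eqP /set2_eq vw _] /= e.
by case: vw => -[-> ->]; rewrite !inE e eqxx ?orbT.
Qed.

Lemma edge_col_edge k (col : T -> T -> option 'I_k) v w :
  dicolouring g col -> g v w -> edge_col col [set v; w] != None.
Proof.
move=> Hc /(dicol_cover Hc) vw; rewrite /edge_col; case: pickP => [[x y] /andP[] //|none].
case/orP: vw => nn; first by move: (none (v, w)); rewrite /= eqxx nn.
by move: (none (w, v)); rewrite /= [[set w; v]]setUC eqxx nn.
Qed.

Lemma dicol_sr_part k (col : T -> T -> option 'I_k) (i0 : 'I_k) :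
  dicolouring g col -> sr_part g k.
Proof.
move=> Hc; pose c := [ffun A => odflt i0 (edge_col col A)].
apply/existsP; exists c; apply/forallP => i.
apply/existsP; exists (inord 1); apply/forallP => v; apply/implyP => pos.
have le2 : cdeg g c i v <= 2.
  apply: leq_trans (card_edges_at _ _) _.
  apply: (@leq_trans #|outs col v i :|: ins col v i|); last first.
    apply: leq_trans (leq_card_setU _ _) _.
    by rewrite -[2]/(1 + 1) leq_add ?(dicol_outs Hc) ?(dicol_ins Hc).
  apply/subset_leq_card/subsetP => w; rewrite inE ffunE => /andP[gvw].
  case E: (edge_col col [set v; w]) (edge_col_edge Hc gvw) => [d|] // _ /= /eqP di.
  by rewrite inE; apply: edge_colP; rewrite E di.
have T_gt1 : 1 < #|T|.+1 by rewrite ltnS; apply/card_gt0P; exists v.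
by rewrite inordK //; move: pos le2; case: (cdeg g c i v) => [|[|[|n]]].
Qed.

End EdgeClasses.

Lemma find_iota_le (P : pred nat) N i : i < N -> P i -> find P (iota 0 N) <= i.
Proof.
move=> iN Pi; rewrite leqNgt; apply/negP => /(before_find 0).
by rewrite nth_iota // add0n Pi.
Qed.

Lemma find_iotaP (P : pred nat) N i : i < N -> P i -> P (find P (iota 0 N)).
Proof.
move=> iN Pi; have hasP : has P (iota 0 N) by apply/hasP; exists i; rewrite ?mem_iota.
have := nth_find 0 hasP; rewrite nth_iota //.
by rewrite -[N in _ < N](size_iota 0 N) -has_find.
Qed.

Theorem theorem3 (T : finType) (g : rel T)
  (gsym : symmetric g) (girr : irreflexive g)
  (hedge : exists x y, g x y) :
  wr g <= sr g /\ sr g <= (maxdeg g + 2) %/ 2.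
Proof.
have [x0 [y0 gxy0]] := hedge.
set k := (maxdeg g + 2) %/ 2.
have deg_le_maxdeg x : deg g x <= maxdeg g := leq_bigmax (F := deg g) x.
have deg_le x : deg g x <= 2 * k by have := deg_le_maxdeg x; rewrite /k; lia.
have maxdeg_gt0 : 0 < maxdeg g.
  by apply: leq_trans (deg_le_maxdeg x0); apply/card_gt0P; exists y0; rewrite inE.
have k_gt0 : 0 < k by rewrite /k; lia.
have k_lt : k < #|edges g|.+1.
  by have := maxdeg_le_card_edges girr; rewrite /k; lia.
have [col Hc] := dicol_exists gsym girr deg_le.
have sr_k : sr_part g k := dicol_sr_part gsym (Ordinal k_gt0) Hc.
have sr_le : sr g <= k := find_iota_le k_lt sr_k.
have sr_lt : sr g < #|edges g|.+1 := leq_ltn_trans sr_le k_lt.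
have sr_P : sr_part g (sr g) := find_iotaP k_lt sr_k.
split=> //; exact: find_iota_le sr_lt (sr_part_wr_part gsym sr_P).
Qed.
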